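(* Let $r$ be a prime power, $q=r^2$, and let $0\le k\le n\le q$ be integers. Then there exists a Hermitian self-orthogonal matrix-product code over $\mathbb{F}_q$ with parameters $[2n,n,d]_q$ where $d\ge\min\{2(n-k+1),k+1\}$.
   Context: For $a\in\mathbb{F}_q$, $\overline{a}:=a^r$. The Hermitian inner product on $\mathbb{F}_q^n$ is $\langle u,v\rangle_H=\sum_i u_i\overline{v_i}$; a linear code $C$ is Hermitian self-orthogonal if $C\subseteq C^{\perp_H}$. A code with parameters $[n,k,d]_q$ has length $n$, dimension $k$, minimum Hamming weight $d$. If $C_1,\dots,C_s$ are linear codes of length $m$ with generator matrices $G_i$ and $A=[a_{ij}]\in M_{s,l}(\mathbb{F}_q)$, the matrix-product code $[C_1,\dots,C_s]\cdot A$ is the linear code of length $ml$ generated by the block matrix whose $(i,j)$ block is $a_{ij}G_i$. *)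

From HB Require Import structures.
From mathcomp Require Import all_boot all_order all_algebra all_field.
Set Implicit Arguments. Unset Strict Implicit. Unset Printing Implicit Defensive.
Import GRing.Theory.
Local Open Scope ring_scope.

(* Linear codes of length N over F are given by generator matrices
   G : 'M[F]_(k, N); the code is the row space of G (mxalgebra). *)

(* Hermitian inner product <u,v>_H = sum_i u_i * v_i^r  (conjugation a ↦ a^r). *)
Definition herm_ip (F : fieldType) (r N : nat) (u v : 'rV[F]_N) : F :=
  \sum_(i < N) u 0 i * (v 0 i) ^+ r.

Definition herm_self_orth (F : fieldType) (r k N : nat) (G : 'M[F]_(k, N)) : Prop :=
  forall u v : 'rV[F]_N, (u <= G)%MS -> (v <= G)%MS -> herm_ip r u v = 0.

Definition wt (F : fieldType) (N : nat) (u : 'rV[F]_N) : nat :=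
  #|[set i : 'I_N | u 0 i != 0]|.

(* Matrix-product code [C_1,...,C_s]·A: generated by the block matrix whose
   (i,j) block is a_ij G_i; its length is \sum_(j < l) m = m*l. *)
Definition mpc (F : fieldType) (s l m : nat) (k : 'I_s -> nat)
    (G : forall i : 'I_s, 'M[F]_(k i, m)) (A : 'M[F]_(s, l))
    : 'M[F]_(\sum_(i < s) k i, \sum_(j < l) m) :=
  \mxblock_(i < s, j < l) (A i j *: G i).

From HB Require Import structures.
From mathcomp Require Import all_boot all_order all_algebra all_field cyclic.
From mathcomp Require Import zify ring.
Set Implicit Arguments. Unset Strict Implicit. Unset Printing Implicit Defensive.
Import GRing.Theory.
Local Open Scope ring_scope.

(* Let C1 be the Reed-Solomon code of dimension k on n distinct points of F and
   C2 its Hermitian dual, which is the Euclidean dual of the Reed-Solomon code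
   on the conjugate points, hence an MDS code of dimension n - k and minimum
   distance k + 1.  Pick a != b with a^(r+1) = b^(r+1) = -1: a = -1 for even r,
   a = g^((r-1)/2) for a primitive root g otherwise, and b = a g^(r-1).  The words
   of [C1, C2] . [1 a; 1 b] are (x + y, a x + b y) with x in C1, y in C2.  As
   C1 and C2 are Hermitian-orthogonal, the product of two such words is
   (1 + a^(r+1)) <x, x'> + (1 + b^(r+1)) <y, y'> = 0; the code has dimension
   k + (n - k), and a nonzero word has weight 2 wt x >= 2 (n - k + 1) when
   y = 0 and at least wt y >= k + 1 otherwise, since y_j != 0 forces
   x_j + y_j != 0 or a x_j + b y_j != 0. *)

Lemma big_Rank (R : Type) (idx : R) (op : Monoid.com_law idx)
    (s : nat) (p_ : 'I_s -> nat) (f : 'I_(\sum_(i < s) p_ i) -> R) :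
  \big[op/idx]_t f t = \big[op/idx]_(i < s) \big[op/idx]_(j < p_ i) f (tagnat.Rank i j).
Proof.
rewrite sig_big_dep /= (reindex _ tagnat.sig_bij_on) /=.
by apply: eq_bigr => t _; rewrite tagnat.sig2K.
Qed.

Lemma big_ord2 (R : Type) (idx : R) (op : Monoid.law idx) (f : 'I_2 -> R) :
  \big[op/idx]_(i < 2) f i = op (f ord0) (f ord_max).
Proof. by rewrite big_ord_recl big_ord1; congr (op _ (f _)); apply: val_inj. Qed.

Lemma mpc_submxrow (F : fieldType) (s l m : nat) (k : 'I_s -> nat)
    (G : forall i : 'I_s, 'M[F]_(k i, m)) (A : 'M[F]_(s, l))
    (w : 'rV[F]_(\sum_(i < s) k i)) (j : 'I_l) :
  submxrow (w *m mpc G A) j = \sum_i A i j *: (submxrow w i *m G i).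
Proof.
rewrite /mpc -{1}[w]submxrowK mul_mxrow_mxblock mxrowK.
by apply: eq_bigr => i _; rewrite scalemxAr.
Qed.

Section Weight.
Variable F : fieldType.

Lemma wtE N (u : 'rV[F]_N) : wt u = (\sum_(i < N) (u ord0 i != 0%R))%N.
Proof. by rewrite /wt -sum1_card big_mkcond; apply: eq_bigr => i _; rewrite inE. Qed.

Lemma wt0 N : wt (0 : 'rV[F]_N) = 0%N.
Proof. by rewrite wtE big1 // => i _; rewrite mxE eqxx. Qed.

Lemma wtZ N (c : F) (u : 'rV[F]_N) : c != 0 -> wt (c *: u) = wt u.
Proof.
by move=> c0; rewrite !wtE; apply: eq_bigr => i _; rewrite mxE mulf_eq0 (negPf c0).
Qed.

Lemma wt_submxrow (s : nat) (p_ : 'I_s -> nat) (u : 'rV[F]_(\sum_(i < s) p_ i)) :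
  wt u = (\sum_(j < s) wt (submxrow u j))%N.
Proof.
rewrite wtE (big_Rank (Monoid.ComLaw.clone _ _ addn _)) /=.
by apply: eq_bigr => j _; rewrite wtE; apply: eq_bigr => l _; rewrite mxE.
Qed.

Lemma wt_le_wt_add_wt_comb (N : nat) (a b : F) (x y : 'rV[F]_N) :
  a != b -> (wt y <= wt (x + y) + wt (a *: x + b *: y))%N.
Proof.
move=> ab; apply: leq_trans (leq_card_setU _ _).
apply/subset_leq_card/subsetP => j; rewrite !inE !mxE -negb_and.
apply: contra => /andP [/eqP s0 /eqP t0].
have : (b - a) * y 0 j = (a * x 0 j + b * y 0 j) - a * (x 0 j + y 0 j) by ring.
by rewrite s0 t0 mulr0 subrr => /eqP; rewrite mulf_eq0 subr_eq0 eq_sym (negPf ab).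
Qed.

End Weight.

Section HermitianForm.
Variables (F : fieldType) (r : nat).
Hypothesis exprD_r : forall x y : F, (x + y) ^+ r = x ^+ r + y ^+ r.
Hypothesis exprK_r : forall x : F, (x ^+ r) ^+ r = x.

Lemma expr0n_r : (0 : F) ^+ r = 0.
Proof. by apply: (@addrI _ (0 ^+ r)); rewrite -exprD_r !addr0. Qed.

Lemma expr_sum_r (I : Type) (s : seq I) (P : pred I) (f : I -> F) :
  (\sum_(i <- s | P i) f i) ^+ r = \sum_(i <- s | P i) f i ^+ r.
Proof. exact: (big_morph (fun x : F => x ^+ r) exprD_r expr0n_r). Qed.

Lemma herm_ip_submxrow (s : nat) (p_ : 'I_s -> nat) (u v : 'rV[F]_(\sum_(i < s) p_ i)) :
  herm_ip r u v = \sum_(j < s) herm_ip r (submxrow u j) (submxrow v j).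
Proof.
rewrite /herm_ip (big_Rank (Monoid.ComLaw.clone _ _ +%R _)) /=.
by apply: eq_bigr => j _; apply: eq_bigr => l _; rewrite !mxE.
Qed.

Variable N : nat.
Implicit Types u v w : 'rV[F]_N.

Lemma herm_ipDl u v w : herm_ip r (u + v) w = herm_ip r u w + herm_ip r v w.
Proof. by rewrite /herm_ip -big_split; apply: eq_bigr => i _; rewrite mxE mulrDl. Qed.

Lemma herm_ipZl c u w : herm_ip r (c *: u) w = c * herm_ip r u w.
Proof. by rewrite /herm_ip mulr_sumr; apply: eq_bigr => i _; rewrite mxE mulrA. Qed.

Lemma herm_ipDr u v w : herm_ip r u (v + w) = herm_ip r u v + herm_ip r u w.
Proof.
by rewrite /herm_ip -big_split; apply: eq_bigr => i _; rewrite mxE exprD_r mulrDr.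
Qed.

Lemma herm_ipZr c u w : herm_ip r u (c *: w) = c ^+ r * herm_ip r u w.
Proof.
by rewrite /herm_ip mulr_sumr; apply: eq_bigr => i _; rewrite mxE exprMn mulrCA.
Qed.

Lemma herm_ipC u v : herm_ip r v u = herm_ip r u v ^+ r.
Proof.
by rewrite /herm_ip expr_sum_r; apply: eq_bigr => i _; rewrite exprMn exprK_r mulrC.
Qed.

Lemma herm_ip_Vandermonde_tr_ker (k : nat) (a : 'rV[F]_N) (w : 'rV[F]_k) (y : 'rV[F]_N) :
    y *m (Vandermonde k (map_mx (fun x => x ^+ r) a))^T = 0 ->
  herm_ip r (w *m Vandermonde k a) y = 0.
Proof.
move=> yV0; rewrite herm_ipC.
have -> : herm_ip r y (w *m Vandermonde k a) =
    \sum_i w 0 i ^+ r * (y *m (Vandermonde k (map_mx (fun x => x ^+ r) a))^T) 0 i.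
  rewrite /herm_ip; under eq_bigr => j _ do rewrite mxE expr_sum_r mulr_sumr.
  rewrite exchange_big; apply: eq_bigr => i _; rewrite mxE mulr_sumr.
  by apply: eq_bigr => j _; rewrite !mxE exprMn exprAC mulrCA.
by rewrite yV0 big1 ?expr0n_r // => i _; rewrite mxE mulr0.
Qed.

End HermitianForm.

Section ReedSolomon.
Variables (F : fieldType) (n k : nat) (a : 'rV[F]_n).
Hypothesis a_inj : injective (a 0).
Local Notation V := (Vandermonde k a).

Lemma size_rVpoly (w : 'rV[F]_k) : (size (rVpoly w) <= k)%N.
Proof. exact: size_poly. Qed.

Lemma mul_Vandermonde (w : 'rV[F]_k) j : (w *m V) 0 j = (rVpoly w).[a 0 j].
Proof.
rewrite mxE (horner_coef_wide _ (size_rVpoly w)).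
by apply: eq_bigr => i _; rewrite coef_rVpoly_ord mxE.
Qed.

Lemma wt_mul_Vandermonde (w : 'rV[F]_k) : w != 0 -> (n < wt (w *m V) + k)%N.
Proof.
move=> w_neq0; set P := rVpoly w.
have P_neq0 : P != 0 by rewrite raddf_eq0 //; exact: can_inj rVpolyK.
set Z := [set j | (w *m V) 0 j == 0].
have wtZ : wt (w *m V) = #|~: Z|.
  by rewrite /wt; apply: eq_card => j; rewrite !inE.
have := max_poly_roots P_neq0 (rs := [seq a 0 j | j in Z]).
rewrite size_map -cardE map_inj_uniq ?enum_uniq //.
have -> : all (root P) [seq a 0 j | j in Z].
  apply/allP => x /mapP [j]; rewrite mem_enum inE => Zj ->.
  by rewrite /root -mul_Vandermonde.
move=> /(_ isT isT) ltZP.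
rewrite -[X in (X < _)%N]card_ord -(cardsC Z) -wtZ addnC ltn_add2l.
exact: leq_trans ltZP (size_rVpoly w).
Qed.

Lemma Vandermonde_row_free : (k <= n)%N -> row_free V.
Proof.
move=> le_kn; apply/inj_row_free => w wV0; apply/eqP; apply: contraT => w_neq0.
by have := wt_mul_Vandermonde w_neq0; rewrite wV0 wt0 add0n ltnNge le_kn.
Qed.

Lemma sum_horner_Vandermonde_tr (z : 'rV[F]_n) (P : {poly F}) : (size P <= k)%N ->
  \sum_j z 0 j * P.[a 0 j] = \sum_(i < k) P`_i * (z *m V^T) 0 i.
Proof.
move=> sPk; under eq_bigr => j _ do rewrite (horner_coef_wide _ sPk) mulr_sumr.
rewrite exchange_big; apply: eq_bigr => i _; rewrite mxE mulr_sumr.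
by apply: eq_bigr => j _; rewrite !mxE mulrCA.
Qed.

Lemma wt_Vandermonde_tr_ker (z : 'rV[F]_n) : z *m V^T = 0 -> z != 0 -> (k < wt z)%N.
Proof.
move=> zV0 z_neq0; rewrite ltnNge; apply/negP => wt_le_k.
set S := [set j | z 0 j != 0].
have [j0 Sj0] : exists j0, j0 \in S.
  apply/set0Pn; apply: contraNneq z_neq0 => S0; apply/eqP/rowP => j.
  by apply/eqP; apply: contraFT (in_set0 j); rewrite -S0 inE mxE.
pose P := \prod_(t <- [seq a 0 j | j in S :\ j0]) ('X - t%:P).
have sPk : (size P <= k)%N.
  rewrite size_prod_XsubC size_map -cardE.
  by have := cardsD1 j0 S; rewrite Sj0 /wt -/S in wt_le_k *; lia.
have rootP j : root P (a 0 j) = (j \in S :\ j0).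
  rewrite root_prod_XsubC; apply/mapP/idP => [[l] | Sj].
    by rewrite mem_enum => Sl /a_inj ->.
  by exists j; rewrite ?mem_enum.
have := sum_horner_Vandermonde_tr z sPk; rewrite zV0.
rewrite (bigD1 j0) //= big1 => [|j j_neq_j0]; last first.
  have [Sj | nSj] := boolP (j \in S).
    by rewrite (eqP (_ : root P (a 0 j))) ?mulr0 // rootP in_setD1 j_neq_j0 Sj.
  by move: nSj; rewrite inE negbK => /eqP ->; rewrite mul0r.
rewrite addr0 big1 => [/eqP|i _]; last by rewrite mxE mulr0.
rewrite mulf_eq0 -/(root P _) rootP in_setD1 eqxx orbF.
by move: Sj0; rewrite inE => /negPf ->.
Qed.

End ReedSolomon.

Lemma mxrow2_eq0 (R : nmodType) (m : nat) (p_ : 'I_2 -> nat)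
    (u : 'M[R]_(m, \sum_i p_ i)) :
  submxrow u ord0 = 0 -> submxrow u ord_max = 0 -> u = 0.
Proof.
move=> u0 u1; apply/mxrowP => j; rewrite submxrow0.
have [->|->] : j = ord0 \/ j = ord_max.
  by case: j => -[|[|//]] ?; [left | right]; apply: val_inj.
all: done.
Qed.

Definition pair_dims (k1 k2 : nat) (i : 'I_2) : nat := if i == ord0 then k1 else k2.

Definition pair_gens (R : Type) (n k1 k2 : nat) (G1 : 'M[R]_(k1, n)) (G2 : 'M[R]_(k2, n))
    (i : 'I_2) : 'M[R]_(pair_dims k1 k2 i, n) :=
  match i == ord0 as c return 'M[R]_(if c then k1 else k2, n) with
  | true => G1
  | false => G2
  end.

Definition mpc2_mx (F : fieldType) (a b : F) : 'M[F]_2 :=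
  \matrix_(i, j) if j == ord0 then 1 else if i == ord0 then a else b.

Definition mpc2 (F : fieldType) (n k1 k2 : nat) (G1 : 'M[F]_(k1, n)) (G2 : 'M[F]_(k2, n))
    (a b : F) : 'M[F]_(\sum_i pair_dims k1 k2 i, \sum_(j < 2) n) :=
  mpc (pair_gens G1 G2) (mpc2_mx a b).

Section MatrixProductCode2.
Variables (F : fieldType) (n k1 k2 : nat) (G1 : 'M[F]_(k1, n)) (G2 : 'M[F]_(k2, n)).
Variables a b : F.
Local Notation M := (mpc2 G1 G2 a b).

Lemma mpc2_submxrow (w : 'rV[F]_(\sum_i pair_dims k1 k2 i)) :
  submxrow (w *m M) ord0 = submxrow w ord0 *m G1 + submxrow w ord_max *m G2 /\
  submxrow (w *m M) ord_max =
    a *: (submxrow w ord0 *m G1) + b *: (submxrow w ord_max *m G2).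
Proof. by rewrite !mpc_submxrow !big_ord2 !mxE /= !scale1r. Qed.

Lemma mpc2_codeword (u : 'rV[F]_(\sum_(j < 2) n)) : (u <= M)%MS ->
  exists x y, [/\ (x <= G1)%MS, (y <= G2)%MS,
    submxrow u ord0 = x + y & submxrow u ord_max = a *: x + b *: y].
Proof.
case/submxP => w ->; have [u0 u1] := mpc2_submxrow w.
by exists (submxrow w ord0 *m G1), (submxrow w ord_max *m G2); rewrite !submxMl.
Qed.

Lemma mpc2_rank : row_free G1 -> row_free G2 -> a != b -> \rank M = (k1 + k2)%N.
Proof.
move=> free1 free2 ab.
suff /eqP -> : row_free M by rewrite big_ord2.
apply/inj_row_free => w wM0; have [u0 u1] := mpc2_submxrow w.
rewrite wM0 submxrow0 in u0; rewrite wM0 submxrow0 in u1.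
set x := submxrow w ord0 *m G1 in u0 u1; set y := submxrow w ord_max *m G2 in u0 u1.
have y0 : y = 0.
  have : (a - b) *: y = a *: (x + y) - (a *: x + b *: y).
    by rewrite scalerBl scalerDr opprD addrACA subrr add0r.
  by rewrite -u0 -u1 scaler0 subrr => /eqP; rewrite scaler_eq0 subr_eq0 (negPf ab) => /eqP.
have x0 : x = 0 by move: u0; rewrite y0 addr0.
by apply: mxrow2_eq0; [apply: (row_free_inj free1) | apply: (row_free_inj free2)];
  rewrite mul0mx.
Qed.

Lemma mpc2_wt (d1 d2 : nat) :
    (forall x, (x <= G1)%MS -> x != 0 -> (d1 <= wt x)%N) ->
    (forall y, (y <= G2)%MS -> y != 0 -> (d2 <= wt y)%N) ->
    a != 0 -> a != b ->
  forall u, (u <= M)%MS -> u != 0 -> (minn (2 * d1) d2 <= wt u)%N.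
Proof.
move=> wt1 wt2 a0 ab u /mpc2_codeword [x [y [G1x G2y u0 u1]]] u_neq0.
rewrite wt_submxrow big_ord2 u0 u1.
have [y0 | y_neq0] := eqVneq y 0; last first.
  by rewrite geq_min (leq_trans (wt2 y G2y y_neq0)) ?orbT ?wt_le_wt_add_wt_comb.
have x_neq0 : x != 0.
  apply: contraNneq u_neq0 => x0; apply/eqP/(@mxrow2_eq0 _ _ (fun _ => n)).
    by rewrite u0 x0 y0 addr0.
  by rewrite u1 x0 y0 !scaler0 addr0.
by rewrite y0 scaler0 !addr0 wtZ // geq_min mul2n -addnn leq_add ?wt1.
Qed.

Variable r : nat.
Hypothesis exprD_r : forall x y : F, (x + y) ^+ r = x ^+ r + y ^+ r.
Hypothesis exprK_r : forall x : F, (x ^+ r) ^+ r = x.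

Lemma mpc2_herm_self_orth :
    (forall x y, (x <= G1)%MS -> (y <= G2)%MS -> herm_ip r x y = 0) ->
    a ^+ r.+1 = -1 -> b ^+ r.+1 = -1 ->
  herm_self_orth r M.
Proof.
move=> orth ar br u v /mpc2_codeword [x [y [G1x G2y u0 u1]]].
move=> /mpc2_codeword [x' [y' [G1x' G2y' v0 v1]]].
have xy' := orth x y' G1x G2y'.
have yx' : herm_ip r y x' = 0.
  by rewrite (herm_ipC exprD_r exprK_r) orth // expr0n_r.
rewrite herm_ip_submxrow big_ord2 /= u0 u1 v0 v1.
rewrite !(herm_ipDl, herm_ipDr exprD_r, herm_ipZl, herm_ipZr) xy' yx'.
rewrite !mulr0 !addr0 !add0r !mulrA -!exprS ar br !mulN1r.
by rewrite addrACA !subrr addr0.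
Qed.

End MatrixProductCode2.

Section HermitianReedSolomon.
Variables (F : fieldType) (r n k : nat) (pts : 'rV[F]_n) (a b : F).
Hypothesis exprD_r : forall x y : F, (x + y) ^+ r = x ^+ r + y ^+ r.
Hypothesis exprK_r : forall x : F, (x ^+ r) ^+ r = x.
Hypothesis pts_inj : injective (pts 0).
Hypothesis le_kn : (k <= n)%N.
Hypotheses (aN1 : a ^+ r.+1 = -1) (bN1 : b ^+ r.+1 = -1) (a_neq_b : a != b).

Local Notation conj_pts := (map_mx (fun x => x ^+ r) pts).
Local Notation RS := (Vandermonde k pts).
Local Notation RS_herm_dual := (kermx (Vandermonde k conj_pts)^T).
Local Notation M := (mpc2 RS (row_base RS_herm_dual) a b).

Lemma conj_pts_inj : injective (conj_pts 0).
Proof.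
by move=> i j; rewrite !mxE => /(congr1 (fun x => x ^+ r)); rewrite !exprK_r => /pts_inj.
Qed.

Lemma RS_herm_dual_mul (y : 'rV[F]_n) :
  (y <= row_base RS_herm_dual)%MS -> y *m (Vandermonde k conj_pts)^T = 0.
Proof. by rewrite eq_row_base => /sub_kermxP. Qed.

Lemma herm_RS_mpc2_rank : \rank M = n.
Proof.
rewrite mpc2_rank ?row_base_free ?Vandermonde_row_free //.
rewrite mxrank_ker mxrank_tr.
by have /eqP -> := Vandermonde_row_free conj_pts_inj le_kn; rewrite subnKC.
Qed.

Lemma herm_RS_mpc2_self_orth : herm_self_orth r M.
Proof.
apply: mpc2_herm_self_orth => // _ y /submxP [w ->] /RS_herm_dual_mul.
exact: herm_ip_Vandermonde_tr_ker.
Qed.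

Lemma herm_RS_mpc2_wt (u : 'rV[F]_(\sum_(j < 2) n)) : (u <= M)%MS -> u != 0 ->
  (minn (2 * (n - k + 1)) (k + 1) <= wt u)%N.
Proof.
apply: mpc2_wt => [_ /submxP [w ->] wV_neq0 | y /RS_herm_dual_mul yV0 y_neq0 | | //].
- have w_neq0 : w != 0 by apply: contraNneq wV_neq0 => ->; rewrite mul0mx.
  by have := wt_mul_Vandermonde pts_inj w_neq0; lia.
- by rewrite addn1 (wt_Vandermonde_tr_ker conj_pts_inj).
- by apply/eqP => a0; move/eqP: aN1; rewrite a0 exprS mul0r eq_sym oppr_eq0 oner_eq0.
Qed.

End HermitianReedSolomon.

Lemma finField_prim_root (F : finFieldType) : exists g : F, (#|F|.-1).-primitive_root g.
Proof.
have card_gt0 : (0 < #|F|)%N by rewrite ltnW // finNzRing_gt1.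
have /hasP [g _ g_prim] : has (#|F|.-1).-primitive_root (enum (predC1 (0 : F))).
  apply: has_prim_root; rewrite ?enum_uniq -?cardE ?cardC1 ?ltn_predRL ?finNzRing_gt1 //.
  apply/allP => x; rewrite mem_enum /= => x_neq0; apply/unity_rootP.
  by apply: (mulfI x_neq0); rewrite -exprS prednK // expf_card mulr1.
by exists g.
Qed.

Lemma prim_root_neq1 (R : idomainType) (m : nat) (z : R) :
  m.-primitive_root z -> (1 < m)%N -> z != 1.
Proof.
move=> z_prim m_gt1; rewrite -[X in _ != X](expr0 z) -[X in X != _]expr1.
by rewrite (eq_prim_root_expr z_prim) !modn_small // ltnW.
Qed.

Lemma two_roots_expS_eqN1 (F : fieldType) (r : nat) (g : F) :
    (1 < r)%N -> ((r ^ 2).-1).-primitive_root g ->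
  exists a b : F, [/\ a ^+ r.+1 = -1, b ^+ r.+1 = -1 & a != b].
Proof.
move=> r_gt1 g_prim; have m_eq : (r ^ 2).-1 = ((r - 1) * r.+1)%N by nia.
have z_prim : (r.+1).-primitive_root (g ^+ (r - 1)).
  by rewrite -[(r - 1)%N](mulnK _ (ltn0Sn r)) -m_eq dvdn_prim_root // m_eq dvdn_mull.
have z_neq1 := prim_root_neq1 z_prim (ltnW r_gt1 : (1 < r.+1)%N).
have [a aN1] : exists a : F, a ^+ r.+1 = -1.
  have [r_odd | r_even] := boolP (odd r); last first.
    by exists (-1); rewrite -signr_odd /= (negPf r_even).
  have two_dvd : (2 %| r - 1)%N by rewrite dvdn2 oddB ?r_odd // ltnW.
  have two_dvd_m : (2 %| (r ^ 2).-1)%N by rewrite m_eq dvdn_mulr.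
  have h_prim := dvdn_prim_root g_prim two_dvd_m.
  exists (g ^+ ((r - 1) %/ 2)); rewrite -exprM divn_mulAC // -m_eq.
  have /eqP := prim_expr_order h_prim.
  by rewrite sqrf_eq1 (negPf (prim_root_neq1 h_prim _)) //= => /eqP.
exists a, (a * g ^+ (r - 1)); split=> //.
  by rewrite exprMn aN1 prim_expr_order // mulr1.
have a_neq0 : a != 0.
  by apply/eqP => a0; move/eqP: aN1; rewrite a0 exprS mul0r eq_sym oppr_eq0 oner_eq0.
by rewrite -[X in X != _]mulr1 (inj_eq (mulfI a_neq0)) eq_sym.
Qed.

Unset Implicit Arguments.

Theorem corollary5p3 (F : finFieldType) (r p e : nat) :
  prime p -> (0 < e)%N -> r = (p ^ e)%N -> #|F| = (r ^ 2)%N ->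
  forall k n : nat, (k <= n <= #|F|)%N ->
  exists (kk : 'I_2 -> nat) (G : forall i : 'I_2, 'M[F]_(kk i, n)) (A : 'M[F]_2),
    \rank (mpc G A) = n /\
    herm_self_orth r (mpc G A) /\
    (forall u : 'rV[F]_(\sum_(j < 2) n),
        (u <= mpc G A)%MS -> u != 0 ->
        (minn (2 * (n - k + 1)) (k + 1) <= wt u)%N).
Proof.
move=> p_prime e_gt0 r_def cardF k n /andP [le_kn le_nF].
have r_gt1 : (1 < r)%N by rewrite r_def -[X in (X < _)%N](expn0 p) ltn_exp2l ?prime_gt1.
have pcharF : p \in [pchar F].
  by apply: (card_finPcharP (n := e * 2)); rewrite // cardF r_def expnM.
have exprD_r (x y : F) : (x + y) ^+ r = x ^+ r + y ^+ r.
  by rewrite exprDn_pchar // r_def pnatX (eq_pnat _ (pcharf_eq pcharF)) pnat_id.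
have exprK_r (x : F) : (x ^+ r) ^+ r = x by rewrite -exprM mulnn -cardF expf_card.
have [g g_prim] := finField_prim_root F; rewrite cardF in g_prim.
have [a [b [aN1 bN1 a_neq_b]]] := two_roots_expS_eqN1 r_gt1 g_prim.
pose pts : 'rV[F]_n := \row_j enum_val (widen_ord le_nF j).
have pts_inj : injective (pts 0).
  by move=> i j; rewrite !mxE => /enum_val_inj [] /val_inj.
pose RS_herm_dual := kermx (Vandermonde k (map_mx (fun x => x ^+ r) pts))^T.
exists (pair_dims k (\rank RS_herm_dual)),
  (pair_gens (Vandermonde k pts) (row_base RS_herm_dual)), (mpc2_mx a b).
split; [|split].
- exact: herm_RS_mpc2_rank.
- exact: herm_RS_mpc2_self_orth.
- exact: herm_RS_mpc2_wt.
Qed.
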